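(* Let $(M,d)$ be a complete pointed metric space with at least three distinct points. Then $G\cap(-G)=\Phi\,\mathrm{Lip}_0(M)$.
   Context: $\mathrm{Lip}_0(M)$: Lipschitz $f:M\to\mathbb{R}$ with $f(0)=0$ ($0$ the base point). $\widetilde{M}=\{(x,y)\in M\times M:x\ne y\}$, $\beta\widetilde{M}$ its Stone–Čech compactification. $\Phi:\mathrm{Lip}_0(M)\to C(\beta\widetilde{M})$ maps $f$ to the continuous extension of $(x,y)\mapsto(f(x)-f(y))/d(x,y)$. $G$ is the set of $g\in C(\beta\widetilde{M})$ such that $d(x,y)g(x,y)\le d(x,u)g(x,u)+d(u,y)g(u,y)$ for all distinct $x,u,y\in M$. *)

From HB Require Import structures.
From mathcomp Require Import all_boot all_order all_algebra.
From mathcomp Require Import all_classical all_reals all_analysis.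
From Stdlib Require Import ClassicalEpsilon.
Set Implicit Arguments. Unset Strict Implicit. Unset Printing Implicit Defensive.
Import Order.TTheory GRing.Theory Num.Theory.
Import numFieldNormedType.Exports.
Local Open Scope ring_scope.
Local Open Scope classical_set_scope.

Section Defs.
Context {R : realType} {M : Type} (d : M -> M -> R).

Definition is_metric : Prop :=
  (forall x y, 0 <= d x y) /\ (forall x y, d x y = 0 <-> x = y) /\
  (forall x y, d x y = d y x) /\ (forall x y z, d x z <= d x y + d y z).

Definition complete_metric : Prop :=
  forall u : nat -> M,
    (forall eps : R, 0 < eps -> exists N, forall m n, (N <= m)%N -> (N <= n)%N ->
        d (u m) (u n) < eps) ->
    exists l, forall eps : R, 0 < eps -> exists N, forall n, (N <= n)%N -> d (u n) l < eps.

Definition Lip0 (x0 : M) (f : M -> R) : Prop :=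
  (exists L : R, forall x y, `|f x - f y| <= L * d x y) /\ f x0 = 0.

(* \widetilde M = {(x,y) : x <> y}, with the topology induced from M x M,
   metrized by d(x,x') + d(y,y'). *)
Definition Mtilde := {p : M * M | p.1 <> p.2}.

Definition dtilde (p q : Mtilde) : R :=
  d (sval p).1 (sval q).1 + d (sval p).2 (sval q).2.

Definition mt_continuous {T : topologicalType} (h : Mtilde -> T) : Prop :=
  forall p (U : set T), nbhs (h p) U ->
    exists delta : R, 0 < delta /\ forall q, dtilde p q < delta -> U (h q).

Definition mt_bounded (h : Mtilde -> R) : Prop :=
  exists C : R, forall p, `|h p| <= C.

(* (K, e) is a Stone-Cech compactification of \widetilde M (Cech's
   characterization): K compact Hausdorff, e continuous with dense image,
   and every bounded continuous real function on \widetilde M extends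
   continuously along e. *)
Definition is_stone_cech (K : topologicalType) (e : Mtilde -> K) : Prop :=
  compact [set: K] /\ hausdorff_space K /\ mt_continuous e /\
  (forall U : set K, open U -> U !=set0 -> exists p, U (e p)) /\
  (forall h : Mtilde -> R, mt_continuous h -> mt_bounded h ->
     exists g : K -> R, continuous g /\ forall p, g (e p) = h p).

Definition dq (f : M -> R) (p : Mtilde) : R :=
  (f (sval p).1 - f (sval p).2) / d (sval p).1 (sval p).2.

Definition Phi {K : topologicalType} (e : Mtilde -> K) (f : M -> R) : K -> R :=
  epsilon (inhabits (fun _ => 0))
    (fun g : K -> R => continuous g /\ forall p, g (e p) = dq f p).

Definition inG {K : topologicalType} (e : Mtilde -> K) (g : K -> R) : Prop :=
  continuous g /\
  forall x u y (hxu : x <> u) (huy : u <> y) (hxy : x <> y),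
    d x y * g (e (exist _ (x, y) hxy)) <=
    d x u * g (e (exist _ (x, u) hxu)) + d u y * g (e (exist _ (u, y) huy)).

End Defs.

From HB Require Import structures.
From mathcomp Require Import all_boot all_order all_algebra.
From mathcomp Require Import all_classical all_reals all_analysis.
From mathcomp Require Import lra ring.
From Stdlib Require Import ClassicalEpsilon.
Set Implicit Arguments. Unset Strict Implicit. Unset Printing Implicit Defensive.
Import Order.TTheory GRing.Theory Num.Theory.
Import numFieldNormedType.Exports.
Local Open Scope ring_scope.
Local Open Scope classical_set_scope.

(* If g and -g both lie in G, the defining inequality of G holds with equality,
   so H(x,y) := d(x,y) g(x,y) is additive along triples of distinct points.
   A third point makes H antisymmetric, hence H(x,y) = f(x) - f(y) with
   f(x) := H(x,x0); f is Lipschitz with constant sup |g|, which is finite by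
   compactness, and g = Phi f because both are continuous and agree on the
   dense image of the pairs.  Conversely d(x,y) (Phi f)(x,y) = f(x) - f(y) turns
   the inequality of G into an identity. *)

Section MetricFacts.
Variables (R : realType) (M : Type) (d : M -> M -> R).
Hypothesis hmet : is_metric d.

Lemma metric_ge0 x y : 0 <= d x y.
Proof. by case: hmet. Qed.

Lemma metric_xx x : d x x = 0.
Proof. by case: hmet => _ [deq _]; apply/deq. Qed.

Lemma metric_gt0 x y : x <> y -> 0 < d x y.
Proof.
case: hmet => _ [deq _] hxy; rewrite lt0r metric_ge0 andbT.
by apply/eqP => /deq.
Qed.

Lemma metric_pair_diff x y x' y' : `|d x' y' - d x y| <= d x x' + d y y'.
Proof.
case: hmet => _ [_ [dsym dtri]]; rewrite ler_norml; apply/andP; split.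
- by have := dtri x x' y; have := dtri x' y' y; have := dsym y y'; lra.
- by have := dtri x' x y'; have := dtri x y y'; have := dsym x x'; lra.
Qed.

End MetricFacts.

Lemma norm_divB_le (R : realFieldType) (a a' D D' : R) : 0 < D -> 0 < D' ->
  `|a / D - a' / D'| <= (`|a - a'| + `|a' / D'| * `|D' - D|) / D.
Proof.
move=> D0 D'0.
have -> : a / D - a' / D' = ((a - a') + (a' / D') * (D' - D)) / D.
  by field; rewrite !gt_eqF.
rewrite normrM normfV (gtr0_norm D0) ler_pM2r ?invr_gt0 // -normrM.
exact: ler_normD.
Qed.

Section DifferenceQuotient.
Variables (R : realType) (M : Type) (d : M -> M -> R).
Hypothesis hmet : is_metric d.
Variables (f : M -> R) (L : R).
Hypothesis hL : forall x y, `|f x - f y| <= L * d x y.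

Lemma norm_dq_le p : `|dq d f p| <= L.
Proof.
case: p => -[x y] /= hxy; have D0 := metric_gt0 hmet hxy.
by rewrite /dq /= normrM normfV (gtr0_norm D0) ler_pdivrMr.
Qed.

Lemma dq_bounded : mt_bounded (dq d f).
Proof. by exists L; apply: norm_dq_le. Qed.

Lemma dq_continuous : mt_continuous d (dq d f).
Proof.
move=> p U /nbhs_ballP [eps eps0 hball].
have L0 : 0 <= L := le_trans (normr_ge0 _) (norm_dq_le p).
case: p hball => -[x y] /= hxy hball; have D0 := metric_gt0 hmet hxy.
exists (eps * d x y / (2 * L + 1)); split.
  by apply: divr_gt0; [exact: mulr_gt0 | lra].
case=> -[x' y'] /= hxy'; rewrite /dtilde /= => hq; apply: hball.
rewrite /ball /= /dq /=.
set t := d x x' + d y y' in hq *.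
have t0 : 0 <= t := addr_ge0 (metric_ge0 hmet _ _) (metric_ge0 hmet _ _).
have ht : t * (2 * L + 1) < eps * d x y by rewrite -ltr_pdivlMr //; lra.
have hnum : `|f x - f y - (f x' - f y')| <= L * t.
  have -> : f x - f y - (f x' - f y') = (f x - f x') - (f y - f y') by ring.
  by apply: le_trans (ler_normB _ _) _; rewrite mulrDr lerD.
have hden : `|(f x' - f y') / d x' y'| * `|d x' y' - d x y| <= L * t.
  apply: ler_pM => //; first exact: (norm_dq_le (exist _ (x', y') hxy')).
  exact: metric_pair_diff.
apply: le_lt_trans (norm_divB_le _ _ D0 (metric_gt0 hmet hxy')) _.
rewrite ltr_pdivrMr //.
lra.
Qed.

End DifferenceQuotient.

Lemma continuous_dense_eq (R : realType) (T : Type) (K : topologicalType)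
    (e : T -> K) (hdense : forall U : set K, open U -> U !=set0 -> exists p, U (e p))
    (g g' : K -> R) :
  continuous g -> continuous g' -> (forall p, g (e p) = g' (e p)) -> g = g'.
Proof.
move=> cg cg' he; apply/funext => k; apply/eqP/negP => /negP hne.
have cd : continuous (g - g') by move=> z; exact: (continuousB (cg z) (cg' z)).
have oU : open ((g - g') @^-1` (~` [set 0])).
  apply: (@open_comp _ _ (g - g')); first by move=> z _; apply: cd.
  by apply: closed_openC; apply: closed_eq.
have ne : ((g - g') @^-1` (~` [set 0])) !=set0.
  by exists k => /= /eqP; rewrite subr_eq0; exact/negP.
have [p /= hp] := hdense _ oU ne.
by apply: hp; rewrite !fctE he subrr.
Qed.

Lemma compact_continuous_bounded (R : realType) (K : topologicalType) (g : K -> R) :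
  compact [set: K] -> continuous g -> exists C, forall k, `|g k| <= C.
Proof.
move=> cK cg.
have cA : compact (g @` [set: K]).
  by apply: continuous_compact => //; apply: continuous_subspaceT.
have [C [_ HC]] := compact_bounded cA.
by exists (C + 1) => k; apply: (HC (C + 1)); [rewrite ltrDl | exists k].
Qed.

Section StoneCech.
Variables (R : realType) (M : Type) (d : M -> M -> R).
Variables (K : topologicalType) (e : @Mtilde M -> K).
Hypothesis hK : is_stone_cech d e.

Lemma Phi_spec f g : continuous g -> (forall p, g (e p) = dq d f p) ->
  continuous (Phi d e f) /\ forall p, Phi d e f (e p) = dq d f p.
Proof.
move=> cg hg; exact: (epsilon_spec (inhabits (fun _ : K => (0 : R)))
  (fun g0 : K -> R => continuous g0 /\ forall p, g0 (e p) = dq d f p)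
  (ex_intro _ g (conj cg hg))).
Qed.

Lemma Phi_unique f g : continuous g -> (forall p, g (e p) = dq d f p) ->
  Phi d e f = g.
Proof.
move=> cg hg; have [cP hP] := Phi_spec cg hg.
have [_ [_ [_ [hdense _]]]] := hK.
by apply: (continuous_dense_eq hdense cP cg) => p; rewrite hP hg.
Qed.

Lemma Phi_lipschitz f L : is_metric d -> (forall x y, `|f x - f y| <= L * d x y) ->
  continuous (Phi d e f) /\ forall p, Phi d e f (e p) = dq d f p.
Proof.
move=> hmet hL; have [_ [_ [_ [_ ext]]]] := hK.
have [g [cg hg]] := ext _ (dq_continuous hmet hL) (dq_bounded hmet hL).
exact: Phi_spec cg hg.
Qed.

End StoneCech.

Section Cocycle.
Variables (R : realFieldType) (M : Type).
Hypothesis hthree : exists a b c : M, a <> b /\ b <> c /\ a <> c.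

Lemma exists_neq2 (x y : M) : exists u, u <> x /\ u <> y.
Proof.
apply: contrapT => /forallNP nou.
have two u : u = x \/ u = y.
  case: (pselect (u = x)) => [|ux]; [by left | right].
  by apply: contrapT => uy; exact: nou u (conj ux uy).
have [a [b [c]]] := hthree.
by case: (two a) => ->; case: (two b) => ->; case: (two c) => ->; tauto.
Qed.

Variable H : M -> M -> R.
Hypothesis H_diag : forall x, H x x = 0.
Hypothesis H_add : forall x u y, x <> u -> u <> y -> x <> y -> H x y = H x u + H u y.

Lemma cocycle_antisym x y : H y x = - H x y.
Proof.
case: (pselect (x = y)) => [<-|hxy]; first by rewrite H_diag oppr0.
have [u [ux uy]] := exists_neq2 x y.
have xu := not_eq_sym ux; have yu := not_eq_sym uy; have yx := not_eq_sym hxy.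
have := H_add xu uy hxy; have := H_add yu ux yx.
have := H_add hxy yu xu; have := H_add ux hxy uy.
lra.
Qed.

Lemma cocycle_potential x0 x y : H x y = H x x0 - H y x0.
Proof.
case: (pselect (x = y)) => [<-|hxy]; first by rewrite H_diag subrr.
case: (pselect (x = x0)) => [->|hx]; first by rewrite H_diag sub0r cocycle_antisym.
case: (pselect (y = x0)) => [->|hy]; first by rewrite H_diag subr0.
by rewrite (H_add hx (not_eq_sym hy) hxy) (cocycle_antisym y x0).
Qed.

End Cocycle.

Section Increment.
Variables (R : realType) (M : Type) (d : M -> M -> R).
Variables (K : topologicalType) (e : @Mtilde M -> K).
Hypothesis hmet : is_metric d.

Definition increment (g : K -> R) (x y : M) : R :=
  if pselect (x = y) is right hxy then d x y * g (e (exist _ (x, y) hxy)) else 0.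

Lemma increment_neq g x y (hxy : x <> y) :
  increment g x y = d x y * g (e (exist _ (x, y) hxy)).
Proof.
rewrite /increment; case: pselect => [/hxy[] | hxy'].
by rewrite (Prop_irrelevance hxy' hxy).
Qed.

Lemma increment_diag g x : increment g x x = 0.
Proof. by rewrite /increment; case: pselect. Qed.

Lemma increment_add g : inG d e g -> inG d e (fun k => - g k) ->
  forall x u y, x <> u -> u <> y -> x <> y ->
  increment g x y = increment g x u + increment g u y.
Proof.
move=> [_ hg] [_ hng] x u y hxu huy hxy.
rewrite (increment_neq g hxy) (increment_neq g hxu) (increment_neq g huy).
apply/le_anti/andP; split; first exact: hg.
by have := hng x u y hxu huy hxy; rewrite !mulrN; lra.
Qed.

Lemma norm_increment_le g C : (forall k, `|g k| <= C) ->
  forall x y, `|increment g x y| <= C * d x y.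
Proof.
move=> hC x y; case: (pselect (x = y)) => [<-|hxy].
  by rewrite increment_diag (metric_xx hmet) normr0 mulr0.
rewrite (increment_neq g hxy) normrM (ger0_norm (metric_ge0 hmet _ _)) mulrC.
by rewrite ler_wpM2r // (metric_ge0 hmet).
Qed.

Lemma inG_of_increment g (f : M -> R) : continuous g ->
  (forall x y (hxy : x <> y), d x y * g (e (exist _ (x, y) hxy)) = f x - f y) ->
  inG d e g /\ inG d e (fun k => - g k).
Proof.
move=> cg hf; split; split => [|x u y hxu huy hxy].
- exact: cg.
- by rewrite !hf; lra.
- by move=> z; exact: (continuousN (cg z)).
- by rewrite !mulrN !hf; lra.
Qed.

End Increment.

Theorem proposition2p8 (R : realType) (M : Type) (d : M -> M -> R) (x0 : M)
  (hmet : is_metric d) (hcomp : complete_metric d)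
  (hthree : exists a b c : M, a <> b /\ b <> c /\ a <> c)
  (K : topologicalType) (e : @Mtilde M -> K) (hK : is_stone_cech d e) :
  [set g : K -> R | inG d e g /\ inG d e (fun k => - g k)] =
  [set Phi d e f | f in [set f : M -> R | Lip0 d x0 f]].
Proof.
apply/seteqP; split.
- move=> g [Gg Gng]; pose f x := increment d e g x x0.
  have f_diff x y : increment d e g x y = f x - f y.
    by rewrite /f (cocycle_potential hthree (increment_diag d e g) (increment_add Gg Gng) x0).
  have [cK _] := hK.
  have [C hC] := compact_continuous_bounded cK (proj1 Gg).
  exists f; first split.
  + by exists C => x y; rewrite -f_diff; exact (norm_increment_le e hmet hC x y).
  + exact: increment_diag.
  apply: (Phi_unique hK (proj1 Gg)) => -[[x y] /= hxy].
  rewrite /dq /= -f_diff (increment_neq d e g hxy) mulrAC divff ?mul1r //.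
  by rewrite gt_eqF // metric_gt0.
- move=> _ [f [[L hL] _] <-].
  have [cP hP] := Phi_lipschitz hK hmet hL.
  apply: inG_of_increment cP _ => x y hxy.
  by rewrite hP /dq /= mulrC divfK // gt_eqF // metric_gt0.
Qed.
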